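(* Let $t=\frac13$ and $p=\frac1b$ for an integer $b\ge3$. Then bold play is optimal, i.e. $\pi(p,\frac13)=1-(1-p)^3$, attained by $c_1=c_2=c_3=\frac13$, $c_i=0$ for $i\ge4$.
   Context: Let $\beta_1,\beta_2,\ldots$ be independent Bernoulli random variables with success probability $p$. A stake sequence is a sequence $\gamma=(c_1,c_2,\ldots)$ of non-negative reals with $c_1\ge c_2\ge\cdots$ and $\sum_i c_i=1$; write $S_\gamma=\sum_i c_i\beta_i$. For $0\le p\le t\le 1$ define $\pi(p,t)=\sup\{\mathbf P(S_\gamma\ge t)\mid \gamma \text{ a stake sequence}\}$. Bold play for threshold $t$ is the stake sequence with $c_i=\frac1m$ for $i\le m$ and $c_i=0$ for $i>m$, where $m=\lfloor 1/t\rfloor$; it is optimal if it attains $\pi(p,t)$. *)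

From HB Require Import structures.
From mathcomp Require Import all_boot all_order all_algebra.
From mathcomp Require Import all_classical all_reals all_analysis.
Set Implicit Arguments. Unset Strict Implicit. Unset Printing Implicit Defensive.
Import Order.TTheory GRing.Theory Num.Theory.
Import numFieldNormedType.Exports.
Local Open Scope classical_set_scope.
Local Open Scope ring_scope.

Definition stake_seq (R : realType) (c : nat -> R) : Prop :=
  (forall i, 0 <= c i) /\ (forall i, c i.+1 <= c i) /\ (series c @ \oo --> (1 : R)).

(* beta_1, beta_2, ... (indexed from 0 here) are independent Bernoulli(p)
   random variables with values in {0,1}: each is measurable, 0/1-valued,
   and every finite family of distinct indices has the product joint law. *)
Definition iid_bernoulli d (T : measurableType d) (R : realType)
  (P : probability T R) (beta : nat -> T -> R) (p : R) : Prop :=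
  (forall i, measurable_fun setT (beta i)) /\
  (forall i w, beta i w = 0 \/ beta i w = 1) /\
  (forall (s : seq nat) (e : nat -> bool), uniq s ->
     P [set w | forall i, i \in s -> beta i w = (e i)%:R] =
     (\prod_(i <- s) (if e i then p else 1 - p))%:E).

Definition S_gamma (R : realType) T (c : nat -> R) (beta : nat -> T -> R)
  (w : T) : R := limn (series (fun i => c i * beta i w)).

Definition pi_val d (T : measurableType d) (R : realType)
  (P : probability T R) (beta : nat -> T -> R) (t : R) : R :=
  sup [set r | exists c, stake_seq c /\
         r = fine (P [set w | t <= S_gamma c beta w])].

Definition bold_third (R : realType) (i : nat) : R :=
  if (i < 3)%N then 3^-1 else 0.

From HB Require Import structures.
From mathcomp Require Import all_boot all_order all_algebra.
From mathcomp Require Import all_classical all_reals all_analysis.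
From mathcomp Require Import measurable_realfun.
From mathcomp Require Import lra ring.
Import Order.TTheory GRing.Theory Num.Theory.
Import numFieldNormedType.Exports.
Local Open Scope classical_set_scope.
Local Open Scope ring_scope.

(* For N large the tail
   T = 1 - (c_0 + ... + c_(N+1)) is small, and winning forces the stakes won
   among c_0, ..., c_(N+1) to sum to at least t = 1/3 - T; N is chosen with
   2T < c_1 (unless c_1 = 0).
   A p-coin deciding whether a stake is won can be realised by throwing the
   stake into one of b bins uniformly at random and asking whether it landed in
   a fixed bin, so b P(stakes won reach t) is the expected number of bins whose
   content reaches t.  Throw the small stakes first and c_0, c_1 last.  Before
   the last two throws the bins hold less than 3t - c_0, so at most two of them
   are full.  If at most one is full, each other bin reaches t with probability
   at most 1 - (1 - p)^2.  If two are full, every other bin holds less than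
   t - c_0 and needs both big stakes, hence reaches t with probability at most
   p^2.  Either way the expected count is at most b (1 - (1 - p)^3), the second
   time because p <= 1/3.  Bold play attains this value. *)

Fixpoint reach_prob {R : realType} (p t : R) (l : seq R) (s : R) : R :=
  if l is c :: l' then p * reach_prob p t l' (s + c) + (1 - p) * reach_prob p t l' s
  else (t <= s)%R%:R.

Section ReachProbability.
Context {R : realType}.
Implicit Types (p t s u v x c : R) (l : seq R).

Lemma reach_prob_ge0_le1 p t l s : 0 <= p <= 1 -> 0 <= reach_prob p t l s <= 1.
Proof.
move=> p01; elim: l s => [|c l IH] s /=; first by case: (t <= s); rewrite /= ?lexx ?ler01.
by have := IH (s + c); have := IH s; nra.
Qed.

Lemma reach_prob2_le p t u v x : 0 <= p <= 1 ->
  reach_prob p t [:: u; v] x <= 1 - (1 - p) ^+ 2 + (1 - p) ^+ 2 * (t <= x)%R%:R.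
Proof.
by move=> p01 /=; case: (t <= x + u + v); case: (t <= x + u); case: (t <= x + v);
  case: (t <= x); rewrite /= ?mulr0 ?mulr1 ?addr0; nra.
Qed.

Lemma reach_prob2_le_sqr p t u v x : 0 <= p <= 1 -> 0 <= v <= u -> x + u < t ->
  reach_prob p t [:: u; v] x <= p ^+ 2.
Proof.
move=> p01 vu xut /=.
have miss y : y <= x + u -> (t <= y)%R%:R = 0 :> R.
  by move=> yxu; rewrite leNgt (le_lt_trans yxu xut).
rewrite (miss (x + u)) ?(miss (x + v)) ?(miss x); try lra.
by case: (t <= x + u + v); rewrite /= ?mulr0 ?mulr1 ?addr0; nra.
Qed.

End ReachProbability.

Lemma sum_ord_indicator {R : ringType} {n} (k : 'I_n) (f : bool -> R) :
  \sum_(j < n) f (k == j) = f true + (n%:R - 1) * f false.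
Proof.
rewrite (bigD1 k) //= eqxx (eq_bigr (fun _ => f false)) => [|j]; last first.
  by rewrite eq_sym => /negbTE ->.
rewrite sumr_const cardC1 card_ord -[f false *+ _]mulr_natl.
have n_gt0 : (0 < n)%N := leq_ltn_trans (leq0n k) (ltn_ord k).
by rewrite -subn1 natrB.
Qed.

Lemma sum_ord_affine {R : ringType} {n} (a e : R) (f : 'I_n -> R) :
  \sum_(k < n) (a + e * f k) = n%:R * a + e * \sum_(k < n) f k.
Proof. by rewrite big_split /= sumr_const card_ord mulr_natl mulr_sumr. Qed.

Lemma invn_gt0_le_third {R : realType} {b} :
  (3 <= b)%N -> 0 < (b%:R^-1 : R) /\ (b%:R^-1 : R) <= 3^-1.
Proof.
move=> b_ge3; have b_gt0 : (0 < b)%N by rewrite (leq_trans _ b_ge3).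
by rewrite invr_gt0 ltr0n lef_pV2 ?posrE ?ltr0n ?(ler_nat R 3).
Qed.

Section Bins.
Context {R : realType}.
Implicit Types (t u v c : R) (l : seq R).

Lemma full_bins_mass b t (r : 'I_b -> R) : (forall k, 0 <= r k) ->
  t * \sum_k (t <= r k)%R%:R <= \sum_k r k.
Proof.
move=> r_ge0; rewrite mulr_sumr; apply: ler_sum => k _.
by case: (lerP t (r k)) => [tr|_]; rewrite /= ?mulr1 ?mulr0 ?r_ge0.
Qed.

Lemma open_bin_mass b t (r : 'I_b -> R) k0 : (forall k, 0 <= r k) -> r k0 < t ->
  r k0 + t * \sum_k (t <= r k)%R%:R <= \sum_k r k.
Proof.
move=> r_ge0 rk0t; rewrite [leRHS](bigD1 k0) //= [X in t * X](bigD1 k0) //=.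
rewrite (leNgt t) rk0t mulrDr mulr0 add0r lerD2l mulr_sumr; apply: ler_sum => k _.
by case: (lerP t (r k)) => [tr|_]; rewrite /= ?mulr1 ?mulr0 ?r_ge0.
Qed.

Lemma last_two_stakes_bins b t (r : 'I_b -> R) u v :
  (3 <= b)%N -> 0 < t -> 0 <= v <= u -> (forall k, 0 <= r k) ->
  \sum_k r k + u < 3 * t \/ \sum_k r k < 2 * t ->
  \sum_k reach_prob b%:R^-1 t [:: u; v] (r k) <= b%:R * (1 - (1 - b%:R^-1) ^+ 3).
Proof.
move=> b_ge3 t_gt0 vu r_ge0 mass.
have u_ge0 : 0 <= u by case/andP: vu; apply: le_trans.
have b_neq0 : (b%:R : R) != 0 by rewrite pnatr_eq0 -lt0n (leq_trans _ b_ge3).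
have [p_gt0 p_le13] := invn_gt0_le_third (R := R) b_ge3.
set p := (b%:R^-1 : R) in p_gt0 p_le13 *.
have -> : b%:R * (1 - (1 - p) ^+ 3) = 3 - 3 * p + p ^+ 2 by rewrite /p; field.
have b_miss2 : b%:R * (1 - (1 - p) ^+ 2) = 2 - p by rewrite /p; field.
have b_sqr : b%:R * p ^+ 2 = p by rewrite /p; field.
clearbody p.
have p01 : 0 <= p <= 1 by apply/andP; split; lra.
pose full : R := \sum_k (t <= r k)%R%:R.
have fullE : \sum_k (t <= r k)%R%:R = full by [].
clearbody full.
have full_mass : t * full <= \sum_k r k by rewrite -fullE; exact: full_bins_mass.
have full_lt3 : full < 3 by rewrite -(ltr_pM2l t_gt0); case: mass => ?; lra.
have [full_le1|full_eq2] : full <= 1 \/ full = 2.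
  move: full_lt3; rewrite -fullE -natr_sum (ltr_nat R _ 3) (ler_nat R _ 1).
  by case: (\sum_k _)%N => [|[|[|n]]] //= _; [left|left|right].
- apply: (@le_trans _ _ (\sum_k (1 - (1 - p) ^+ 2 + (1 - p) ^+ 2 * (t <= r k)%R%:R))).
    by apply: ler_sum => k _; exact: reach_prob2_le.
  rewrite sum_ord_affine fullE b_miss2.
  by have := sqr_ge0 (1 - p); nra.
rewrite {}full_eq2 in fullE full_mass.
have {}mass : \sum_k r k + u < 3 * t by case: mass => [//|small]; lra.
apply: (@le_trans _ _ (\sum_k (p ^+ 2 + (1 - p ^+ 2) * (t <= r k)%R%:R))).
  apply: ler_sum => k _; case: (lerP t (r k)) => [tr|rt] /=.
    have /andP[_ le1] := reach_prob_ge0_le1 p t [:: u; v] (r k) p01.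
    by rewrite mulr1 addrCA subrr addr0.
  rewrite mulr0 addr0; apply: reach_prob2_le_sqr => //.
  have : r k + t * 2 <= \sum_k r k by rewrite -fullE; exact: open_bin_mass.
  lra.
rewrite sum_ord_affine fullE b_sqr.
have : 0 <= 1 - p ^+ 2 by nra.
(* 3 - 3p + p^2 - (p + 2 (1 - p^2)) = (1 - p) (1 - 3p) *)
nra.
Qed.

Lemma sum_reach_prob_cons b t (r : 'I_b -> R) c l : (0 < b)%N ->
  \sum_k reach_prob b%:R^-1 t (c :: l) (r k) =
  b%:R^-1 * \sum_(j < b) \sum_k reach_prob b%:R^-1 t l (r k + (k == j)%:R * c).
Proof.
move=> b_gt0; rewrite exchange_big mulr_sumr; apply: eq_bigr => k _ /=.
rewrite (sum_ord_indicator k (fun e => reach_prob b%:R^-1 t l (r k + e%:R * c))) /=.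
rewrite mul1r mul0r addr0; field.
by rewrite pnatr_eq0 -lt0n.
Qed.

Lemma bins_reach_prob_le b t (r : 'I_b -> R) l u v :
  (3 <= b)%N -> 0 < t -> 0 <= v <= u -> all (>= 0) l -> (forall k, 0 <= r k) ->
  \sum_k r k + \sum_(c <- l) c + u < 3 * t \/ \sum_k r k + \sum_(c <- l) c < 2 * t ->
  \sum_k reach_prob b%:R^-1 t (l ++ [:: u; v]) (r k) <=
    b%:R * (1 - (1 - b%:R^-1) ^+ 3).
Proof.
move=> b_ge3 t_gt0 vu; elim: l r => [|c l IH] r l_ge0 r_ge0 mass /=.
  by apply: last_two_stakes_bins => //; rewrite big_nil addr0 in mass.
case/andP: l_ge0 => c_ge0 l_ge0.
have b_gt0 : (0 < b)%N by rewrite (leq_trans _ b_ge3).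
have b_gtR : (0 < b%:R :> R) by rewrite ltr0n.
rewrite sum_reach_prob_cons // -(ler_pM2l b_gtR) mulrA mulfV ?gt_eqF // mul1r.
apply: (@le_trans _ _ (\sum_(j < b) b%:R * (1 - (1 - b%:R^-1) ^+ 3))); last first.
  by rewrite sumr_const card_ord [leRHS]mulr_natl.
apply: ler_sum => j _; apply: (IH (fun k => r k + (k == j)%:R * c)) => // [k|].
  by rewrite addr_ge0 // mulr_ge0.
have -> : \sum_k (r k + (k == j)%:R * c) = \sum_k r k + c.
  rewrite big_split /=; congr (_ + _).
  under eq_bigr do rewrite eq_sym.
  by rewrite (sum_ord_indicator j (fun e => e%:R * c)) /= mul1r mul0r mulr0 addr0.
by rewrite big_cons addrA in mass.
Qed.

Lemma reach_prob_last_two_le b t l u v :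
  (3 <= b)%N -> 0 < t -> 0 <= v <= u -> all (>= 0) l ->
  \sum_(c <- l) c + u < 3 * t \/ \sum_(c <- l) c < 2 * t ->
  reach_prob b%:R^-1 t (l ++ [:: u; v]) 0 <= 1 - (1 - b%:R^-1) ^+ 3.
Proof.
move=> b_ge3 t_gt0 vu l_ge0 mass.
have b_gt0 : (0 < b%:R :> R) by rewrite ltr0n (leq_trans _ b_ge3).
rewrite -(ler_pM2l b_gt0).
have -> : b%:R * reach_prob b%:R^-1 t (l ++ [:: u; v]) 0 =
    \sum_(k < b) reach_prob b%:R^-1 t (l ++ [:: u; v]) 0.
  by rewrite sumr_const card_ord mulr_natl.
apply: (bins_reach_prob_le b t (fun _ => 0)) => //.
by rewrite big1 // add0r.
Qed.

End Bins.

Definition cylinder {T} {R : realType} (beta : nat -> T -> R) (l : seq nat)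
  (e : nat -> bool) : set T :=
  [set w | forall i, i \in l -> beta i w = (e i)%:R].

Section Cylinders.
Context {d} {T : measurableType d} {R : realType} {beta : nat -> T -> R}.
Hypothesis beta_meas : forall i, measurable_fun setT (beta i).
Implicit Types (c : nat -> R) (t : R) (l : seq nat).
Local Notation cylinder := (cylinder beta).

Lemma measurable_cylinder l e : measurable (cylinder l e).
Proof.
elim: l => [|i l IH].
  by rewrite (_ : cylinder _ _ = setT) //; apply/seteqP; split => // w _ j.
rewrite (_ : cylinder _ _ = beta i @^-1` [set (e i)%:R] `&` cylinder l e).
  by apply: measurableI => //; rewrite -[_ @^-1` _]setTI; exact: beta_meas.
apply/seteqP; split => [w ew|w [/= ewi ew] j].
  by split; [exact: ew (mem_head _ _)|move=> j jl; apply: ew; rewrite inE jl orbT].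
by rewrite inE => /orP[/eqP -> //|]; exact: ew.
Qed.

Lemma measurable_stake_sum_ge c l t :
  measurable [set w | t <= \sum_(i <- l) c i * beta i w].
Proof.
rewrite -[X in measurable X]setTI; apply: measurable_fun_le => //.
by apply: measurable_sum => i; exact: measurable_funM.
Qed.

End Cylinders.

Section Independence.
Context {d} {T : measurableType d} {R : realType} {P : probability T R}
  {beta : nat -> T -> R} {p : R}.
Hypothesis beta_iid : iid_bernoulli P beta p.
Implicit Types (c : nat -> R) (t s : R) (l : seq nat).
Local Notation cylinder := (cylinder beta).

Let beta_meas : forall i, measurable_fun setT (beta i).
Proof. by case: beta_iid. Qed.

Lemma cylinder_cons i l e (x : bool) : i \notin l ->
  cylinder (i :: l) [eta e with i |-> x] = [set w | beta i w = x%:R] `&` cylinder l e.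
Proof.
move=> il; have e_l j : j \in l -> [eta e with i |-> x] j = e j.
  by move=> jl /=; case: eqP => // ji; rewrite -ji jl in il.
apply/seteqP; split => [w ew|w [/= ewi ew] j].
  split; first by have := ew i (mem_head _ _); rewrite /= eqxx.
  by move=> j jl; rewrite -e_l //; apply: ew; rewrite inE jl orbT.
by rewrite inE => /orP[/eqP -> /=|jl]; [rewrite eqxx|rewrite e_l //; exact: ew].
Qed.

Lemma cylinder_stake_sum_ge_cons c t s i l0 l e : i \notin l0 ->
  cylinder l0 e `&` [set w | t <= s + \sum_(j <- i :: l) c j * beta j w] =
  (cylinder (i :: l0) [eta e with i |-> true] `&`
     [set w | t <= (s + c i) + \sum_(j <- l) c j * beta j w]) `|`
  (cylinder (i :: l0) [eta e with i |-> false] `&`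
     [set w | t <= s + \sum_(j <- l) c j * beta j w]).
Proof.
have [_ [beta01 _]] := beta_iid.
move=> il0; rewrite !cylinder_cons //; apply/seteqP; split.
  move=> w [ew /=]; rewrite big_cons.
  by case: (beta01 i w) => ->; rewrite ?mulr0 ?mulr1 ?add0r ?addrA; [right|left].
by move=> w [[[/= bi ew] ht]|[[/= bi ew] ht]]; split => //=;
  rewrite big_cons bi ?mulr1 ?mulr0 ?add0r ?addrA.
Qed.

Lemma measure_cylinder_stake_sum_ge c t l0 l e s : uniq (l0 ++ l) ->
  P (cylinder l0 e `&` [set w | t <= s + \sum_(i <- l) c i * beta i w]) =
    ((\prod_(i <- l0) (if e i then p else 1 - p)) * reach_prob p t (map c l) s)%:E.
Proof.
have [_ [_ beta_prod]] := beta_iid.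
elim: l l0 e s => [|i l IH] l0 e s uniq_l /=.
  rewrite cats0 in uniq_l; case: (lerP t s) => [ts|st]; rewrite /= ?(mulr1, mulr0).
    rewrite -beta_prod //; congr (P _); apply/seteqP; split => [w []//|w ew].
    by split => //=; rewrite big_nil addr0.
  rewrite (_ : _ `&` _ = set0) ?measure0 //; apply/seteqP; split => // w [_ /=].
  by rewrite big_nil addr0 leNgt st.
have il0 : i \notin l0.
  by move: uniq_l; rewrite cat_uniq => /and3P[_ /hasPn /(_ i (mem_head _ _))].
have uniq_il : uniq ((i :: l0) ++ l).
  have perm_il : perm_eq ((i :: l0) ++ l) (l0 ++ i :: l).
    by rewrite -cat1s -catA perm_catCA.
  by rewrite (perm_uniq perm_il).
have P_setU A B : measurable A -> measurable B -> A `&` B = set0 ->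
    P (A `|` B) = P A + P B by exact: measureU.
have piece_meas l1 e1 s1 :
    measurable (cylinder l1 e1 `&` [set w | t <= s1 + \sum_(j <- l) c j * beta j w]).
  apply: measurableI (measurable_cylinder beta_meas _ _) _.
  by under eq_set do rewrite -lerBlDl; exact: measurable_stake_sum_ge.
rewrite cylinder_stake_sum_ge_cons // P_setU; try exact: piece_meas; last first.
  apply/seteqP; split => // w [[ew1 _] [ew0 _]].
  have := ew1 i (mem_head _ _); rewrite (ew0 i (mem_head _ _)) /= eqxx /=.
  by move/eqP; rewrite eq_sym oner_eq0.
rewrite !IH // -EFinD !big_cons /= eqxx.
have e_l0 (x : bool) : \prod_(j <- l0) (if [eta e with i |-> x] j then p else 1 - p) =
    \prod_(j <- l0) (if e j then p else 1 - p).
  by apply: eq_big_seq => j jl0 /=; case: eqP => // ji; rewrite -ji jl0 in il0.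
by rewrite !e_l0; congr (_%:E); ring.
Qed.

Lemma measure_stake_sum_ge c t l : uniq l ->
  P [set w | t <= \sum_(i <- l) c i * beta i w] = (reach_prob p t (map c l) 0)%:E.
Proof.
move=> uniq_l; rewrite (_ : [set w | _] = cylinder [::] (fun=> false) `&`
    [set w | t <= 0 + \sum_(i <- l) c i * beta i w]).
  by rewrite measure_cylinder_stake_sum_ge // big_nil mul1r.
by apply/seteqP; split => w /=; rewrite add0r; [split => // i|case].
Qed.

End Independence.

Section StakeSequence.
Context {R : realType} {c : nat -> R}.
Hypothesis c_stake : stake_seq c.

Lemma stake_seq_ge0 i : 0 <= c i.
Proof. by case: c_stake. Qed.

Lemma stake_seq_nonincreasing i j : (i <= j)%N -> c j <= c i.
Proof.
case: c_stake => _ [c_dec _] /subnK <-; elim: (j - i)%N => [|k IH] //.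
by rewrite addSn; exact: le_trans (c_dec _) IH.
Qed.

Lemma series_stake_le1 n : series c n <= 1.
Proof.
case: c_stake => _ [_ c_cvg]; rewrite -(cvg_lim _ c_cvg) //.
apply: nondecreasing_cvgn_le; last exact: cvgP c_cvg.
by apply: nondecreasing_series => k _ _; exact: stake_seq_ge0.
Qed.

Lemma stake_tail_lt (e : R) : 0 < e -> \forall n \near \oo, 1 - series c n < e.
Proof.
case: c_stake => _ [_ c_cvg] e_gt0; near=> n.
apply: le_lt_trans (ler_norm _) _; near: n; exact: (cvgrPdist_lt _ _).1 c_cvg e e_gt0.
Unshelve. all: by end_near.
Qed.

Lemma stake_truncation : exists N,
  1 - series c N.+2 < 6^-1 /\ (c 1 = 0 \/ 2 * (1 - series c N.+2) < c 1).
Proof.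
have tail_lt (e : R) : 0 < e -> \forall N \near \oo, 1 - series c N.+2 < e.
  move=> e_gt0; have [N _ tailN] := stake_tail_lt e e_gt0.
  by exists N => // n /= nN; apply: tailN; rewrite /= !leqW.
have sixth_gt0 : (0 : R) < 6^-1 by rewrite invr_gt0.
have [c1_gt0|c1_eq0] := ltrP 0 (c 1).
  near \oo => N; exists N; split; [near: N; exact: tail_lt|right].
  by rewrite mulrC -ltr_pdivlMr //; near: N; apply: tail_lt; exact: divr_gt0.
have [N ?] := filter_ex (tail_lt _ sixth_gt0).
by exists N; split => //; left; apply/eqP; rewrite eq_le c1_eq0 stake_seq_ge0.
Unshelve. all: by end_near.
Qed.

End StakeSequence.

Section BernoulliStakeSum.
Context {R : realType} {T : Type} {c : nat -> R} {beta : nat -> T -> R}.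
Hypotheses (c_stake : stake_seq c) (beta01 : forall i w, beta i w = 0 \/ beta i w = 1).

Let stake_term_bounds w i : 0 <= c i * beta i w <= c i.
Proof.
by case: (beta01 i w) => ->; rewrite ?mulr0 ?mulr1 lexx ?(stake_seq_ge0 c_stake).
Qed.

Lemma is_cvg_stake_sum w : cvgn (series (fun i => c i * beta i w)).
Proof.
apply: nondecreasing_is_cvgn.
  by apply: nondecreasing_series => i _ _; case/andP: (stake_term_bounds w i).
exists 1 => _ [n _ <-]; apply: le_trans _ (series_stake_le1 c_stake n).
by apply: ler_sum => i _; case/andP: (stake_term_bounds w i).
Qed.

Lemma S_gamma_le_partial w n :
  S_gamma c beta w <= series (fun i => c i * beta i w) n + (1 - series c n).
Proof.
apply: limr_le; first exact: is_cvg_stake_sum.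
near=> m; have nm : (n <= m)%N by near: m; exact: nbhs_infty_ge.
rewrite -[leLHS](subrK (series (fun i => c i * beta i w) n)) sub_series_geq //.
rewrite addrC lerD2l (@le_trans _ _ (series c m - series c n)) //.
  by rewrite sub_series_geq //; apply: ler_sum => i _; case/andP: (stake_term_bounds w i).
by rewrite lerD2r (series_stake_le1 c_stake).
Unshelve. all: by end_near.
Qed.

End BernoulliStakeSum.

Lemma measurable_S_gamma {d} {T : measurableType d} {R : realType} {c : nat -> R}
    {beta : nat -> T -> R} :
  stake_seq c -> (forall i w, beta i w = 0 \/ beta i w = 1) ->
  (forall i, measurable_fun setT (beta i)) -> measurable_fun setT (S_gamma c beta).
Proof.
move=> c_stake beta01 beta_meas.
apply: (@measurable_fun_cvg _ _ _ setT (fun m w => series (fun i => c i * beta i w) m)).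
  by move=> m; rewrite /series /=; apply: measurable_sum => i; exact: measurable_funM.
by move=> w _; exact: is_cvg_stake_sum.
Qed.

Lemma win_le_reach_prob_trunc {d} {T : measurableType d} {R : realType}
    {P : probability T R} {beta : nat -> T -> R} {p : R} {c : nat -> R} {t : R}
    {n : nat} {l : seq nat} :
  iid_bernoulli P beta p -> stake_seq c -> perm_eq l (iota 0 n) ->
  fine (P [set w | t <= S_gamma c beta w]) <=
    reach_prob p (t - (1 - series c n)) (map c l) 0.
Proof.
move=> beta_iid c_stake l_perm; have [beta_meas [beta01 _]] := beta_iid.
have sum_l (f : nat -> R) : \sum_(i <- l) f i = series f n.
  by rewrite (perm_big _ l_perm) /series /= /index_iota subn0.
have win_meas : measurable [set w | t <= S_gamma c beta w].
  have := measurable_S_gamma c_stake beta01 beta_meas measurableT _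
    (measurable_itv `[t, +oo[).
  by rewrite setTI preimage_itvcy.
have := measurable_stake_sum_ge beta_meas c l (t - (1 - series c n)).
rewrite -lee_fin -(measure_stake_sum_ge beta_iid) ?(perm_uniq l_perm) ?iota_uniq //.
rewrite fineK ?fin_num_measure // => sum_meas.
apply: le_measure; rewrite ?inE // => w /= win.
by have := S_gamma_le_partial c_stake beta01 w n; rewrite sum_l; lra.
Qed.

Lemma stake_seq_win_third_le d (T : measurableType d) (R : realType)
    (P : probability T R) (beta : nat -> T -> R) (b : nat) (c : nat -> R) :
  (3 <= b)%N -> iid_bernoulli P beta b%:R^-1 -> stake_seq c ->
  fine (P [set w | 3^-1 <= S_gamma c beta w]) <= 1 - (1 - b%:R^-1) ^+ 3.
Proof.
move=> b_ge3 beta_iid c_stake.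
have [N [tail_small tail_c1]] := stake_truncation c_stake.
have idx_perm : perm_eq (iota 2 N ++ [:: 0; 1]%N) (iota 0 N.+2).
  by rewrite perm_catC; exact: perm_refl.
apply: le_trans (win_le_reach_prob_trunc beta_iid c_stake idx_perm) _.
have series_c : series c N.+2 = c 0%N + c 1%N + \sum_(i <- iota 2 N) c i.
  by rewrite /series /= /index_iota subn0 /= !big_cons addrA.
rewrite map_cat /=; apply: reach_prob_last_two_le => //.
- by lra.
- by rewrite !(stake_seq_ge0 c_stake) (stake_seq_nonincreasing c_stake).
- by apply/allP => _ /mapP[i _ ->]; exact: stake_seq_ge0.
rewrite big_map; case: tail_c1 => [c1_eq0|c1_big]; last by left; lra.
right; rewrite big1_seq => [|i]; first by lra.
rewrite mem_iota => /andP[_ /andP[i_ge2 _]]; apply/eqP.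
rewrite eq_le (stake_seq_ge0 c_stake) andbT -c1_eq0.
exact: stake_seq_nonincreasing c_stake _ _ (ltnW i_ge2).
Qed.

Lemma series_trunc (V : zmodType) (u : nat -> V) m n : (m <= n)%N ->
  (forall k, (m <= k)%N -> u k = 0) -> series u n = series u m.
Proof.
move=> mn u_eq0; apply/eqP; rewrite -subr_eq0 sub_series_geq //.
by rewrite big_nat_cond big1 // => k /andP[/andP[mk _] _]; exact: u_eq0.
Qed.

Lemma reach_prob_three (R : realType) (p t : R) : 0 < t ->
  reach_prob p t [:: t; t; t] 0 = 1 - (1 - p) ^+ 3.
Proof.
move=> t_gt0; rewrite /= !add0r lexx lerDl lerDr addr_ge0 ?(ltW t_gt0) // leNgt t_gt0 /=.
ring.
Qed.

Section BoldThird.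
Context {R : realType}.
Local Notation bold := (@bold_third R).

Let bold_third_eq0 k : (3 <= k)%N -> bold k = 0.
Proof. by move=> k_ge3; rewrite /bold_third ltnNge k_ge3. Qed.

Lemma bold_third_stake_seq : stake_seq bold.
Proof.
have third_gt0 : (0 : R) < 3^-1 by rewrite invr_gt0.
split; first by move=> i; rewrite /bold_third; case: ifP => // _; exact: ltW.
split.
  move=> i; rewrite /bold_third; case: ifP => [i_lt3|_]; first by rewrite (ltn_trans _ i_lt3).
  by case: ifP => // _; exact: ltW.
apply: cvg_near_cst; near=> n; rewrite (@series_trunc _ _ 3 n) => [||k /bold_third_eq0 //].
  by rewrite /series /= /index_iota /= !big_cons big_nil /bold_third /=; field.
by near: n; exact: nbhs_infty_ge.
Unshelve. all: by end_near.
Qed.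

Lemma S_gamma_bold_third {T} (beta : nat -> T -> R) w :
  S_gamma bold beta w = series (fun i => bold i * beta i w) 3.
Proof.
apply: lim_near_cst => //; near=> n; rewrite (@series_trunc _ _ 3 n) // => [|k].
  by near: n; exact: nbhs_infty_ge.
by move/bold_third_eq0 ->; rewrite mul0r.
Unshelve. all: by end_near.
Qed.

Lemma bold_third_win {d} {T : measurableType d} {P : probability T R}
    {beta : nat -> T -> R} {p : R} :
  iid_bernoulli P beta p ->
  fine (P [set w | 3^-1 <= S_gamma bold beta w]) = 1 - (1 - p) ^+ 3.
Proof.
move=> beta_iid; under eq_set do rewrite S_gamma_bold_third.
rewrite (measure_stake_sum_ge beta_iid) // (_ : map _ _ = [:: 3^-1; 3^-1; 3^-1]) //.
by rewrite reach_prob_three // invr_gt0.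
Qed.

End BoldThird.

Lemma sup_eq_max (R : realType) (E : set R) x : E x -> ubound E x -> sup E = x.
Proof.
move=> Ex x_ub; apply/eqP; rewrite eq_le ge_sup //=; last by exists x.
by apply: ub_le_sup => //; exists x.
Qed.

Theorem proposition20 (d : measure_display) (T : measurableType d)
  (R : realType) (P : probability T R) (beta : nat -> T -> R) (b : nat) :
  (3 <= b)%N ->
  iid_bernoulli P beta (b%:R^-1) ->
  pi_val P beta 3^-1 = 1 - (1 - b%:R^-1) ^+ 3 /\
  fine (P [set w | 3^-1 <= S_gamma (@bold_third R) beta w])
    = 1 - (1 - b%:R^-1) ^+ 3.
Proof.
move=> b_ge3 beta_iid; have bold_win := bold_third_win beta_iid.
split => //; apply: sup_eq_max.
  by exists (@bold_third R); split; [exact: bold_third_stake_seq|rewrite bold_win].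
by move=> _ [c [c_stake ->]]; exact: stake_seq_win_third_le.
Qed.
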